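(* Let $\boldsymbol{a},\boldsymbol{b},\boldsymbol{c}\in\mathbb{R}^3$ be pairwise distinct points carrying vorticity vectors $\boldsymbol{\omega}(\boldsymbol{a}),\boldsymbol{\omega}(\boldsymbol{b}),\boldsymbol{\omega}(\boldsymbol{c})\in\mathbb{R}^3$. With $D$ and $F_{\boldsymbol{\omega}}$ as defined in the context, \[D(\boldsymbol{a},\boldsymbol{b},\boldsymbol{c})+D(\boldsymbol{c},\boldsymbol{b},\boldsymbol{a})=(\boldsymbol{\omega}(\boldsymbol{b})\cdot\nabla_{\boldsymbol{b}})\big[F_{\boldsymbol{\omega}}(\boldsymbol{a},\boldsymbol{b},\boldsymbol{c})+F_{\boldsymbol{\omega}}(\boldsymbol{c},\boldsymbol{b},\boldsymbol{a})\big],\] where on the right the directional derivative in direction $\boldsymbol{\omega}(\boldsymbol{b})$ is taken with respect to the position $\boldsymbol{b}$, with $\boldsymbol{a},\boldsymbol{c},\boldsymbol{\omega}(\boldsymbol{a}),\boldsymbol{\omega}(\boldsymbol{c})$ held fixed.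
   Context: Interaction energy: for vorticity vectors $\boldsymbol{\beta},\boldsymbol{\gamma}_0$ at distinct points $\boldsymbol{b},\boldsymbol{c}$, \[I(\boldsymbol{\beta},\boldsymbol{\gamma}_0,\boldsymbol{c}-\boldsymbol{b})=\frac{1}{16\pi\|\boldsymbol{c}-\boldsymbol{b}\|}\Big[\boldsymbol{\beta}\cdot\boldsymbol{\gamma}_0+\frac{(\boldsymbol{\beta}\cdot(\boldsymbol{c}-\boldsymbol{b}))(\boldsymbol{\gamma}_0\cdot(\boldsymbol{c}-\boldsymbol{b}))}{\|\boldsymbol{c}-\boldsymbol{b}\|^2}\Big].\] The velocity induced at position $\boldsymbol{b}$ by the vorticity at $\boldsymbol{a}$ is $\boldsymbol{v}_{\boldsymbol{a}}(\boldsymbol{b})=\frac{1}{4\pi}\frac{\boldsymbol{\omega}(\boldsymbol{a})\times(\boldsymbol{b}-\boldsymbol{a})}{\|\boldsymbol{a}-\boldsymbol{b}\|^3}$ (Biot–Savart); under the vorticity form of the 3D Euler equations it moves $\boldsymbol{b}$ at rate $\boldsymbol{v}_{\boldsymbol{a}}(\boldsymbol{b})$ and changes the vorticity at $\boldsymbol{b}$ at rate $(\boldsymbol{\omega}(\boldsymbol{b})\cdot\nabla_{\boldsymbol{b}})\boldsymbol{v}_{\boldsymbol{a}}(\boldsymbol{b})$. The effect of $\boldsymbol{a}$'s induced velocity on $\boldsymbol{b}$ on the interaction energy between $\boldsymbol{b}$ and $\boldsymbol{c}$ is \[D(\boldsymbol{a},\boldsymbol{b},\boldsymbol{c})=\nabla_{\boldsymbol{b}}I(\boldsymbol{\beta},\boldsymbol{\omega}(\boldsymbol{c}),\boldsymbol{c}-\boldsymbol{b})\big|_{\boldsymbol{\beta}=\boldsymbol{\omega}(\boldsymbol{b})}\cdot\boldsymbol{v}_{\boldsymbol{a}}(\boldsymbol{b})+\nabla_{\boldsymbol{\beta}}I(\boldsymbol{\beta},\boldsymbol{\omega}(\boldsymbol{c}),\boldsymbol{c}-\boldsymbol{b})\big|_{\boldsymbol{\beta}=\boldsymbol{\omega}(\boldsymbol{b})}\cdot\big((\boldsymbol{\omega}(\boldsymbol{b})\cdot\nabla_{\boldsymbol{b}})\boldsymbol{v}_{\boldsymbol{a}}(\boldsymbol{b})\big),\]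 with the position gradient in the first term taken holding the vorticity argument $\boldsymbol{\beta}$ fixed. The interaction energy flow is \[F_{\boldsymbol{\omega}}(\boldsymbol{a},\boldsymbol{b},\boldsymbol{c})=\frac{1}{64\pi^2}\left[\frac{((\boldsymbol{a}-\boldsymbol{b})\times\boldsymbol{\omega}(\boldsymbol{a}))\cdot\boldsymbol{\omega}(\boldsymbol{c})}{\|\boldsymbol{a}-\boldsymbol{b}\|^3\,\|\boldsymbol{c}-\boldsymbol{b}\|}+\frac{\big(((\boldsymbol{b}-\boldsymbol{a})\times(\boldsymbol{b}-\boldsymbol{c}))\cdot\boldsymbol{\omega}(\boldsymbol{a})\big)\big((\boldsymbol{b}-\boldsymbol{c})\cdot\boldsymbol{\omega}(\boldsymbol{c})\big)}{\|\boldsymbol{a}-\boldsymbol{b}\|^3\,\|\boldsymbol{c}-\boldsymbol{b}\|^3}\right].\] *)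

From Stdlib Require Import Reals.
From Coquelicot Require Import Coquelicot.
Open Scope R_scope.

Record V3 := mkV { vx : R; vy : R; vz : R }.

Definition vadd (u v : V3) : V3 := mkV (vx u + vx v) (vy u + vy v) (vz u + vz v).
Definition vsub (u v : V3) : V3 := mkV (vx u - vx v) (vy u - vy v) (vz u - vz v).
Definition vscale (k : R) (u : V3) : V3 := mkV (k * vx u) (k * vy u) (k * vz u).
Definition dot (u v : V3) : R := vx u * vx v + vy u * vy v + vz u * vz v.
Definition cross (u v : V3) : V3 :=
  mkV (vy u * vz v - vz u * vy v)
      (vz u * vx v - vx u * vz v)
      (vx u * vy v - vy u * vx v).
Definition vnorm (u : V3) : R := sqrt (dot u u).

Definition e1 : V3 := mkV 1 0 0.
Definition e2 : V3 := mkV 0 1 0.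
Definition e3 : V3 := mkV 0 0 1.

Definition partial (f : V3 -> R) (x e : V3) : R :=
  Derive (fun t => f (vadd x (vscale t e))) 0.

Definition grad (f : V3 -> R) (x : V3) : V3 :=
  mkV (partial f x e1) (partial f x e2) (partial f x e3).

Definition conv_deriv (w : V3) (G : V3 -> V3) (x : V3) : V3 :=
  mkV (dot w (grad (fun y => vx (G y)) x))
      (dot w (grad (fun y => vy (G y)) x))
      (dot w (grad (fun y => vz (G y)) x)).

(* Interaction energy I(beta, gamma0, r) with r = c - b *)
Definition Ienergy (beta gamma0 r : V3) : R :=
  / (16 * PI * vnorm r) *
  (dot beta gamma0 + (dot beta r * dot gamma0 r) / (vnorm r ^ 2)).

(* Biot--Savart velocity induced at b by vorticity wa located at a *)
Definition vel (wa a b : V3) : V3 :=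
  vscale (/ (4 * PI) * / (vnorm (vsub a b) ^ 3)) (cross wa (vsub b a)).

Definition Dterm (omega : V3 -> V3) (a b c : V3) : R :=
  dot (grad (fun b' => Ienergy (omega b) (omega c) (vsub c b')) b) (vel (omega a) a b)
  + dot (grad (fun beta => Ienergy beta (omega c) (vsub c b)) (omega b))
        (conv_deriv (omega b) (fun b' => vel (omega a) a b') b).

(* Interaction energy flow F_omega(a,b,c); only omega(a), omega(c) enter *)
Definition Fflow (wa wc a b c : V3) : R :=
  / (64 * PI ^ 2) *
  ( dot (cross (vsub a b) wa) wc / (vnorm (vsub a b) ^ 3 * vnorm (vsub c b))
  + (dot (cross (vsub b a) (vsub b c)) wa * dot (vsub b c) wc)
      / (vnorm (vsub a b) ^ 3 * vnorm (vsub c b) ^ 3)).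

From Stdlib Require Import Reals Lra.
From Coquelicot Require Import Coquelicot.
Open Scope R_scope.

(* The flow is the interaction energy of the velocity induced by [a]:
   F(a,b,c) = I(v_a(b), w(c), c - b).  Since I is linear in its first argument,
   the chain rule gives (w(b).grad_b) F(a,b,c) = D(a,b,c) up to the defect
   d_r I(v_a, w(c), r)[w(b)] - d_r I(w(b), w(c), r)[v_a], which would vanish if the
   derivative of I in r were symmetric in its vector slots.  It is not, but its skew part
   is (8 pi |r|^3)^-1 beta.(delta x (r x gamma)), so the two defects are multiples of the
   triple products [u, w(b), v] and [v, w(b), u] with u = w(a) x (b - a),
   v = w(c) x (b - c), and cancel. *)

Lemma V3_eq (u v : V3) : vx u = vx v -> vy u = vy v -> vz u = vz v -> u = v.
Proof. destruct u, v; cbn; intros -> -> ->; reflexivity. Qed.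

Lemma vnorm_sub_pos (a b : V3) : a <> b -> 0 < vnorm (vsub a b).
Proof.
  intros hab; apply sqrt_lt_R0.
  destruct a as [a1 a2 a3], b as [b1 b2 b3]; unfold dot, vsub; cbn.
  destruct (Req_dec a1 b1), (Req_dec a2 b2), (Req_dec a3 b3); subst;
    try (exfalso; now apply hab);
    repeat match goal with H : ?x <> ?y |- _ =>
      assert (0 < (x - y) * (x - y)) by (apply Rsqr_pos_lt; lra); clear H end;
    nra.
Qed.

Lemma is_derive_eq (f : R -> R) (x l l' : R) : is_derive f x l -> l = l' -> is_derive f x l'.
Proof. now intros H <-. Qed.

Lemma is_derive_Rmult (f g : R -> R) (x df dg : R) :
  is_derive f x df -> is_derive g x dg ->
  is_derive (fun t => f t * g t) x (df * g x + f x * dg).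
Proof. intros Hf Hg; apply (is_derive_mult f g); auto; intros; apply Rmult_comm. Qed.

Lemma is_derive_Rplus (f g : R -> R) (x df dg : R) :
  is_derive f x df -> is_derive g x dg -> is_derive (fun t => f t + g t) x (df + dg).
Proof. apply (is_derive_plus f g). Qed.

Lemma is_derive_Rminus (f g : R -> R) (x df dg : R) :
  is_derive f x df -> is_derive g x dg -> is_derive (fun t => f t - g t) x (df - dg).
Proof. apply (is_derive_minus f g). Qed.

Lemma is_derive_Rconst (c x : R) : is_derive (fun _ => c) x 0.
Proof. apply (is_derive_const (K := R_AbsRing) (V := R_NormedModule)). Qed.

Definition is_derive_V3 (u : R -> V3) (t : R) (du : V3) : Prop :=
  is_derive (fun s => vx (u s)) t (vx du) /\
  is_derive (fun s => vy (u s)) t (vy du) /\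
  is_derive (fun s => vz (u s)) t (vz du).

Lemma is_derive_V3_eq (u : R -> V3) (t : R) (du du' : V3) :
  is_derive_V3 u t du -> du = du' -> is_derive_V3 u t du'.
Proof. now intros H <-. Qed.

Lemma is_derive_V3_const (v : V3) (t : R) : is_derive_V3 (fun _ => v) t (mkV 0 0 0).
Proof. refine (conj _ (conj _ _)); apply is_derive_Rconst. Qed.

Lemma is_derive_V3_line (x e : V3) (t : R) :
  is_derive_V3 (fun s => vadd x (vscale s e)) t e.
Proof.
  refine (conj _ (conj _ _)); cbn; (eapply is_derive_eq;
    [ apply is_derive_Rplus; [ apply is_derive_Rconst | apply is_derive_Rmult;
        [ apply (is_derive_id (K := R_AbsRing)) | apply is_derive_Rconst ] ] | cbn; ring ]).
Qed.

(* Dispatch on the syntactic shape: letting [apply] unify against [_ + _] or [_ * _]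
   unfolds the real-number operations and does not terminate. *)
Ltac derive_by_rules :=
  eapply is_derive_eq;
  [ repeat match goal with
    | H : is_derive ?f _ _ |- is_derive ?f _ _ => exact H
    | |- is_derive (fun _ => _ + _) _ _ => apply is_derive_Rplus
    | |- is_derive (fun _ => _ - _) _ _ => apply is_derive_Rminus
    | |- is_derive (fun _ => _ * _) _ _ => apply is_derive_Rmult
    end
  | cbn; ring ].

Lemma is_derive_V3_sub (u v : R -> V3) (t : R) (du dv : V3) :
  is_derive_V3 u t du -> is_derive_V3 v t dv ->
  is_derive_V3 (fun s => vsub (u s) (v s)) t (vsub du dv).
Proof.
  intros (? & ? & ?) (? & ? & ?); refine (conj _ (conj _ _)); cbn; derive_by_rules.
Qed.

Lemma is_derive_V3_scale (k : R -> R) (u : R -> V3) (t dk : R) (du : V3) :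
  is_derive k t dk -> is_derive_V3 u t du ->
  is_derive_V3 (fun s => vscale (k s) (u s)) t (vadd (vscale dk (u t)) (vscale (k t) du)).
Proof.
  intros ? (? & ? & ?); refine (conj _ (conj _ _)); cbn; derive_by_rules.
Qed.

Lemma is_derive_V3_cross (u v : R -> V3) (t : R) (du dv : V3) :
  is_derive_V3 u t du -> is_derive_V3 v t dv ->
  is_derive_V3 (fun s => cross (u s) (v s)) t (vadd (cross du (v t)) (cross (u t) dv)).
Proof.
  intros (? & ? & ?) (? & ? & ?); refine (conj _ (conj _ _)); cbn; derive_by_rules.
Qed.

Lemma is_derive_dot (u v : R -> V3) (t : R) (du dv : V3) :
  is_derive_V3 u t du -> is_derive_V3 v t dv ->
  is_derive (fun s => dot (u s) (v s)) t (dot du (v t) + dot (u t) dv).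
Proof.
  intros (? & ? & ?) (? & ? & ?); unfold dot; derive_by_rules.
Qed.

Lemma dot_comm (u v : V3) : dot u v = dot v u.
Proof. unfold dot; ring. Qed.

Lemma dot_self_nonneg (u : V3) : 0 <= dot u u.
Proof. destruct u; unfold dot; cbn; nra. Qed.

Lemma is_derive_vnorm (u : R -> V3) (t : R) (du : V3) :
  is_derive_V3 u t du -> vnorm (u t) <> 0 ->
  is_derive (fun s => vnorm (u s)) t (dot (u t) du / vnorm (u t)).
Proof.
  intros Hu Hn.
  assert (Hpos : 0 < dot (u t) (u t)).
  { destruct (dot_self_nonneg (u t)) as [|H0]; [assumption|].
    exfalso; apply Hn; unfold vnorm; rewrite <- H0; apply sqrt_0. }
  unfold vnorm in *; eapply is_derive_eq.
  - apply is_derive_sqrt; [ apply (is_derive_dot _ _ _ _ _ Hu Hu) | exact Hpos ].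
  - rewrite (dot_comm du).
    field; exact Hn.
Qed.

Definition dIenergy_r (beta gamma0 r delta : V3) : R :=
  / (16 * PI) *
  ((dot beta delta * dot gamma0 r + dot beta r * dot gamma0 delta
    - dot beta gamma0 * dot r delta) / vnorm r ^ 3
   - 3 * dot beta r * dot gamma0 r * dot r delta / vnorm r ^ 5).

Lemma is_derive_Ienergy (beta r : R -> V3) (gamma0 : V3) (t : R) (dbeta dr : V3) :
  is_derive_V3 beta t dbeta -> is_derive_V3 r t dr -> vnorm (r t) <> 0 ->
  is_derive (fun s => Ienergy (beta s) gamma0 (r s)) t
    (Ienergy dbeta gamma0 (r t) + dIenergy_r (beta t) gamma0 (r t) dr).
Proof.
  intros Hbeta Hr Hn.
  pose proof PI_RGT_0 as Hpi.
  pose proof (is_derive_V3_const gamma0 t) as Hg.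
  pose proof (is_derive_vnorm r t dr Hr Hn) as HN.
  unfold Ienergy; eapply is_derive_eq.
  - apply is_derive_Rmult.
    + apply is_derive_inv; [ apply is_derive_scal, HN | ].
      apply Rmult_integral_contrapositive_currified; [ lra | exact Hn ].
    + apply is_derive_Rplus; [ apply (is_derive_dot _ _ _ _ _ Hbeta Hg) | ].
      apply is_derive_div; [ | apply is_derive_pow, HN | apply pow_nonzero, Hn ].
      apply is_derive_Rmult; [ apply (is_derive_dot _ _ _ _ _ Hbeta Hr)
                             | apply (is_derive_dot _ _ _ _ _ Hg Hr) ].
  - unfold dIenergy_r, dot; cbn [INR Init.Nat.pred vx vy vz]; field; lra.
Qed.

Lemma vadd_scale0 (x e : V3) : vadd x (vscale 0 e) = x.
Proof. apply V3_eq; cbn; ring. Qed.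

Lemma dot_grad_of_line_derive (f : V3 -> R) (x : V3) (L : V3 -> R) (w : V3) :
  (forall e, is_derive (fun t => f (vadd x (vscale t e))) 0 (L e)) ->
  L w = vx w * L e1 + vy w * L e2 + vz w * L e3 ->
  dot w (grad f x) = L w.
Proof.
  intros Hf ->; unfold grad, partial, dot; cbn.
  now rewrite !(is_derive_unique _ _ _ (Hf _)).
Qed.

Lemma conv_deriv_of_line_derive (G : V3 -> V3) (x : V3) (L : V3 -> V3) (w : V3) :
  (forall e, is_derive_V3 (fun t => G (vadd x (vscale t e))) 0 (L e)) ->
  L w = vadd (vadd (vscale (vx w) (L e1)) (vscale (vy w) (L e2))) (vscale (vz w) (L e3)) ->
  conv_deriv w G x = L w.
Proof.
  intros HG Hw; apply V3_eq; cbn;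
    [ apply (dot_grad_of_line_derive _ _ (fun e => vx (L e)))
    | apply (dot_grad_of_line_derive _ _ (fun e => vy (L e)))
    | apply (dot_grad_of_line_derive _ _ (fun e => vz (L e))) ];
    try (intros e; apply HG); rewrite Hw; cbn; ring.
Qed.

Lemma Ienergy_affine_l (beta e gamma0 r : V3) (t : R) :
  Ienergy (vadd beta (vscale t e)) gamma0 r = Ienergy beta gamma0 r + t * Ienergy e gamma0 r.
Proof. unfold Ienergy, dot, Rdiv; cbn; ring. Qed.

Lemma dot_grad_Ienergy_vort (beta gamma0 r w : V3) :
  dot w (grad (fun beta' => Ienergy beta' gamma0 r) beta) = Ienergy w gamma0 r.
Proof.
  apply (dot_grad_of_line_derive _ _ (fun e => Ienergy e gamma0 r)).
  - intros e; eapply is_derive_ext.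
    { intros t; symmetry; apply Ienergy_affine_l. }
    eapply is_derive_eq.
    + apply is_derive_Rplus; [ apply is_derive_Rconst | ].
      apply is_derive_Rmult; [ apply (is_derive_id (K := R_AbsRing)) | apply is_derive_Rconst ].
    + cbn; ring.
  - unfold Ienergy, dot, Rdiv; cbn; ring.
Qed.

Lemma dot_grad_Ienergy_pos (beta gamma0 b c w : V3) : b <> c ->
  dot w (grad (fun b' => Ienergy beta gamma0 (vsub c b')) b)
  = - dIenergy_r beta gamma0 (vsub c b) w.
Proof.
  intros hbc; pose proof (vnorm_sub_pos c b (not_eq_sym hbc)) as Hq.
  apply (dot_grad_of_line_derive _ _ (fun e => - dIenergy_r beta gamma0 (vsub c b) e)).
  - intros e; eapply is_derive_eq.
    + apply is_derive_Ienergy.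
      * apply is_derive_V3_const.
      * apply is_derive_V3_sub; [ apply is_derive_V3_const | apply is_derive_V3_line ].
      * cbv beta; rewrite vadd_scale0; lra.
    + cbv beta; rewrite vadd_scale0; unfold Ienergy, dIenergy_r, dot, Rdiv; cbn; ring.
  - unfold dIenergy_r, dot, Rdiv; cbn; ring.
Qed.

Definition dvel (wa a b e : V3) : V3 :=
  vadd (vscale (/ (4 * PI) * / vnorm (vsub a b) ^ 3) (cross wa e))
       (vscale (3 * dot (vsub a b) e / (4 * PI * vnorm (vsub a b) ^ 5))
               (cross wa (vsub b a))).

Lemma is_derive_V3_vel_line (wa a b e : V3) : a <> b ->
  is_derive_V3 (fun t => vel wa a (vadd b (vscale t e))) 0 (dvel wa a b e).
Proof.
  intros hab; pose proof (vnorm_sub_pos a b hab) as Hp; pose proof PI_RGT_0 as Hpi.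
  pose proof (is_derive_V3_line b e 0) as Hline.
  assert (Hsub : is_derive_V3 (fun t => vsub a (vadd b (vscale t e))) 0 (vsub (mkV 0 0 0) e))
    by (apply is_derive_V3_sub; [ apply is_derive_V3_const | exact Hline ]).
  unfold vel; eapply is_derive_V3_eq.
  - apply is_derive_V3_scale.
    + apply is_derive_scal, is_derive_inv.
      * apply is_derive_pow, is_derive_vnorm; [ exact Hsub | ].
        cbv beta; rewrite vadd_scale0; lra.
      * cbv beta; rewrite vadd_scale0; apply pow_nonzero; lra.
    + apply is_derive_V3_cross; [ apply is_derive_V3_const | ].
      apply is_derive_V3_sub; [ exact Hline | apply is_derive_V3_const ].
  - cbv beta; rewrite vadd_scale0.
    unfold dvel; apply V3_eq; unfold dot; cbn [INR Init.Nat.pred vx vy vz vadd vscale vsub cross];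
      field; lra.
Qed.

Lemma conv_deriv_vel (wa a b w : V3) : a <> b ->
  conv_deriv w (vel wa a) b = dvel wa a b w.
Proof.
  intros hab; apply conv_deriv_of_line_derive.
  - intros e; apply is_derive_V3_vel_line, hab.
  - unfold dvel, dot, Rdiv; apply V3_eq; cbn; ring.
Qed.

Lemma Fflow_eq_Ienergy_vel (wa wc a b c : V3) :
  Fflow wa wc a b c = Ienergy (vel wa a b) wc (vsub c b).
Proof.
  pose proof PI_RGT_0 as Hpi.
  unfold Fflow, Ienergy, vel, Rdiv; rewrite !Rinv_mult, <- !pow_inv.
  set (P := / vnorm (vsub a b)); set (Q := / vnorm (vsub c b)).
  unfold dot, cross, vsub, vscale; cbn [vx vy vz]; field; lra.
Qed.

Definition dflow (wa wc a b c e : V3) : R :=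
  Ienergy (dvel wa a b e) wc (vsub c b) - dIenergy_r (vel wa a b) wc (vsub c b) e.

Lemma is_derive_Fflow_line (wa wc a b c e : V3) : a <> b -> b <> c ->
  is_derive (fun t => Fflow wa wc a (vadd b (vscale t e)) c) 0 (dflow wa wc a b c e).
Proof.
  intros hab hbc; pose proof (vnorm_sub_pos c b (not_eq_sym hbc)) as Hq.
  eapply is_derive_ext.
  { intros t; symmetry; apply Fflow_eq_Ienergy_vel. }
  eapply is_derive_eq.
  - apply is_derive_Ienergy.
    + apply is_derive_V3_vel_line, hab.
    + apply is_derive_V3_sub; [ apply is_derive_V3_const | apply is_derive_V3_line ].
    + cbv beta; rewrite vadd_scale0; lra.
  - cbv beta; rewrite vadd_scale0; unfold dflow, dIenergy_r, dot, Rdiv; cbn; ring.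
Qed.

Lemma dflow_linear (wa wc a b c w : V3) :
  dflow wa wc a b c w =
  vx w * dflow wa wc a b c e1 + vy w * dflow wa wc a b c e2 + vz w * dflow wa wc a b c e3.
Proof. unfold dflow, dvel, Ienergy, dIenergy_r, dot, Rdiv; cbn; ring. Qed.

Definition flow_defect (wa wb wc a b c : V3) : R :=
  dIenergy_r (vel wa a b) wc (vsub c b) wb - dIenergy_r wb wc (vsub c b) (vel wa a b).

Lemma Dterm_eq_dflow_add_defect (omega : V3 -> V3) (a b c : V3) : a <> b -> b <> c ->
  Dterm omega a b c
  = dflow (omega a) (omega c) a b c (omega b) + flow_defect (omega a) (omega b) (omega c) a b c.
Proof.
  intros hab hbc; unfold Dterm.
  rewrite (dot_comm _ (vel _ _ _)), (dot_comm _ (conv_deriv _ _ _)).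
  rewrite dot_grad_Ienergy_pos, dot_grad_Ienergy_vort, conv_deriv_vel by assumption.
  unfold dflow, flow_defect; ring.
Qed.

Lemma dIenergy_r_skew (beta gamma0 r delta : V3) :
  dIenergy_r beta gamma0 r delta - dIenergy_r delta gamma0 r beta
  = / (8 * PI * vnorm r ^ 3) * dot beta (cross delta (cross r gamma0)).
Proof.
  pose proof PI_RGT_0 as Hpi.
  unfold dIenergy_r, Rdiv; rewrite !Rinv_mult, <- !pow_inv; set (N := / vnorm r).
  unfold dot, cross; cbn [vx vy vz]; field; lra.
Qed.

Lemma flow_defect_antisym (wa wb wc a b c : V3) :
  flow_defect wa wb wc a b c + flow_defect wc wb wa c b a = 0.
Proof.
  pose proof PI_RGT_0 as Hpi.
  unfold flow_defect; rewrite !dIenergy_r_skew.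
  unfold vel; rewrite !Rinv_mult, <- !pow_inv.
  set (P := / vnorm (vsub a b)); set (Q := / vnorm (vsub c b)).
  unfold dot, cross, vsub, vscale; cbn [vx vy vz]; field; lra.
Qed.

Theorem proposition3 (omega : V3 -> V3) (a b c : V3)
  (hab : a <> b) (hbc : b <> c) (hac : a <> c) :
  Dterm omega a b c + Dterm omega c b a =
  dot (omega b)
      (grad (fun b' => Fflow (omega a) (omega c) a b' c
                       + Fflow (omega c) (omega a) c b' a) b).
Proof.
  rewrite (dot_grad_of_line_derive _ _
             (fun e => dflow (omega a) (omega c) a b c e + dflow (omega c) (omega a) c b a e)).
  - rewrite !Dterm_eq_dflow_add_defect by congruence.
    pose proof (flow_defect_antisym (omega a) (omega b) (omega c) a b c); lra.
  - intros e; apply is_derive_Rplus; apply is_derive_Fflow_line; congruence.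
  - rewrite (dflow_linear _ _ a b c), (dflow_linear _ _ c b a); ring.
Qed.
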